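(* (i) If $b\neq0$, then for all $0\le k\le n$, $$E_{n,k}(a,b;c_0,c_\infty)=\frac1{b^kk!}\sum_{j=0}^k(-1)^{k-j}\binom kj(bn+c_0+c_\infty)^{\underline{k-j},b}\,(c_0+c_\infty)^{\overline j,b}\,(bj+c_0)^{\underline n,a}.$$ (ii) For all complex $a,b,c_0,c_\infty$ and all $n\ge0$, as polynomials in $x$, $$(c_0+c_\infty)^{\overline n,b}\,(x)^{\underline n,a}=\sum_{k=0}^nE_{n,k}(a,b;c_0,c_\infty)\,(x-c_0)^{\underline k,b}\,(x+c_\infty)^{\overline{n-k},b}.$$
   Context: GKP triangle $\left[\begin{array}{cc|c}\alpha,&\beta&\gamma\\ \alpha',&\beta'&\gamma'\end{array}\right]_{n,k}$: defined by $T_{0,0}=1$, $T_{n,k}=0$ if $n<0$, $k<0$ or $k>n$, and $T_{n+1,k+1}=[\alpha n+\beta(k+1)+\gamma]T_{n,k+1}+[\alpha' n+\beta' k+\gamma']T_{n,k}$ for $n\ge0$, $k\in\mathbb Z$. Generalized Eulerian numbers: $E_{n,k}(a,b;c_0,c_\infty):=\left[\begin{array}{cc|c}-a,&b&c_0\\ a+b,&-b&c_\infty\end{array}\right]_{n,k}$, i.e. $E_{n+1,k+1}=[-an+b(k+1)+c_0]E_{n,k+1}+[(a+b)n-bk+c_\infty]E_{n,k}$. $(x)^{\overline n,b}=\prod_{i=0}^{n-1}(x+ib)$, $(x)^{\underline n,b}=\prod_{i=0}^{n-1}(x-ib)$ (empty product $=1$). *)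

From HB Require Import structures.
From mathcomp Require Import all_boot all_order all_algebra.
Set Implicit Arguments. Unset Strict Implicit. Unset Printing Implicit Defensive.
Import Order.TTheory GRing.Theory Num.Theory.
Local Open Scope ring_scope.

(* GKP triangle [alpha, beta | gamma ; alpha', beta' | gamma']_{n,k},
   with k : nat (T_{n,k} = 0 for k < 0 is built in: the k = 0 case of the
   recurrence has the T_{n,-1} term dropped). *)
Fixpoint GKP (R : nzRingType) (al be ga al' be' ga' : R) (n k : nat) : R :=
  match n with
  | 0%N => (k == 0%N)%:R
  | n'.+1 =>
    match k with
    | 0%N => (al * n'%:R + ga) * GKP al be ga al' be' ga' n' 0
    | k'.+1 => (al * n'%:R + be * k%:R + ga) * GKP al be ga al' be' ga' n' k
             + (al' * n'%:R + be' * k'%:R + ga') * GKP al be ga al' be' ga' n' k'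
    end
  end.

Definition genEuler (R : nzRingType) (a b c0 cinf : R) (n k : nat) : R :=
  GKP (- a) b c0 (a + b) (- b) cinf n k.

Definition rising (R : nzRingType) (x b : R) (n : nat) : R :=
  \prod_(i < n) (x + i%:R * b).

Definition falling (R : nzRingType) (x b : R) (n : nat) : R :=
  \prod_(i < n) (x - i%:R * b).

From HB Require Import structures.
From mathcomp Require Import all_boot all_order all_algebra.
From mathcomp Require Import ring.
Import Order.TTheory GRing.Theory Num.Theory.
Local Open Scope ring_scope.

(* Write P_k = (x - c0)^{\underline k, b} and Q_m = (x + cinf)^{\overline m, b}.
   Multiplying P_k Q_{n-k} by (c0 + cinf + n b)(x - n a) gives
   (-a n + b k + c0) P_k Q_{n+1-k} + ((a + b) n - b k + cinf) P_{k+1} Q_{n-k},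
   and these are exactly the coefficients of the recurrence of E; so summing
   against the recurrence proves (ii) by induction on n.
   For (i), the numbers b^k k! E_{n,k} satisfy the recurrence of E with the
   second coefficient multiplied by b (k+1); the right-hand sum satisfies the
   same recurrence term by term, thanks to (k+1) C(k,j) = (k+1-j) C(k+1,j), and
   its row n = 0 vanishes for k > 0 by the Vandermonde identity for rising
   factorials, since (c)^{\overline j, b} (-c)^{\overline k-j, b} summed with
   binomial weights is (c - c)^{\overline k, b} = 0. *)

Section GKPTriangle.
Variables (R : comNzRingType) (al be ga al' be' ga' : R).
Local Notation T := (GKP al be ga al' be' ga').

Lemma GKP_eq0 n k : (n < k)%N -> T n k = 0.
Proof.
elim: n k => [|n IH] [|k] //= ltnk.
by rewrite !IH ?mulr0 ?addr0 // ltnW.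
Qed.

Lemma sum_GKPS (V : lmodType R) (F : nat -> V) n :
  \sum_(k < n.+2) T n.+1 k *: F k =
  \sum_(k < n.+1) T n k *: ((al * n%:R + be * k%:R + ga) *: F k
                            + (al' * n%:R + be' * k%:R + ga') *: F k.+1).
Proof.
under [RHS]eq_bigr do rewrite scalerDr !scalerA ![T _ _ * _]mulrC.
rewrite big_split /= big_ord_recl /=.
under eq_bigr do rewrite /bump leq0n add1n add0n scalerDl.
rewrite big_split /= addrA; congr (_ + _).
pose G (k : nat) := ((al * n%:R + be * k%:R + ga) * T n k) *: F k.
have -> : al * n%:R + ga = al * n%:R + be * 0%:R + ga by rewrite mulr0 addr0.
rewrite -(big_ord_recl n.+1 (fun k : 'I_n.+2 => G k)) big_ord_recr /=.
by rewrite /G GKP_eq0 // mulr0 scale0r addr0.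
Qed.

End GKPTriangle.

Lemma GKP_binomial (R : comNzRingType) n k :
  GKP 0 0 1 0 0 1 n k = 'C(n, k)%:R :> R.
Proof.
elim: n k => [|n IH] [|k] //=; rewrite !mul0r !add0r !mul1r !IH ?bin0 //.
by rewrite binS natrD addrC.
Qed.

Section Factorials.
Variable R : comNzRingType.
Implicit Types x y b : R.

Lemma rising0 x b : rising x b 0 = 1.
Proof. by rewrite /rising big_ord0. Qed.

Lemma falling0 x b : falling x b 0 = 1.
Proof. by rewrite /falling big_ord0. Qed.

Lemma risingS x b n : rising x b n.+1 = rising x b n * (x + n%:R * b).
Proof. by rewrite /rising big_ord_recr. Qed.

Lemma fallingS x b n : falling x b n.+1 = falling x b n * (x - n%:R * b).
Proof. by rewrite /falling big_ord_recr. Qed.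

Lemma falling_recl x b n : falling x b n.+1 = x * falling (x - b) b n.
Proof.
rewrite /falling big_ord_recl /= mul0r subr0; congr (_ * _).
by apply: eq_bigr => i _; rewrite /bump /= add1n -addn1 natrD; ring.
Qed.

Lemma rising_opp x b n : rising (- x) b n = (-1) ^+ n * falling x b n.
Proof.
elim: n => [|n IH]; first by rewrite falling0 rising0 mulr1.
by rewrite fallingS risingS IH exprS; ring.
Qed.

Lemma rising_vandermonde x y b n :
  rising (x + y) b n =
  \sum_(j < n.+1) 'C(n, j)%:R * (rising x b j * rising y b (n - j)).
Proof.
elim: n => [|n IH]; first by rewrite big_ord1 !rising0 !mulr1.
pose F j : R^o := rising x b j * rising y b (n.+1 - j).
under [RHS]eq_bigr => j _ do rewrite -(GKP_binomial R) -/(F j).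
rewrite -[RHS]/(\sum_(j < n.+2) GKP 0 0 1 0 0 1 n.+1 j *: F j : R^o).
rewrite sum_GKPS risingS IH big_distrl /=; apply: eq_bigr => [[j]] /=.
rewrite ltnS => le_jn _; rewrite /F subSS subSn // !risingS natrB //.
rewrite GKP_binomial !mul0r !add0r !scale1r -[_ *: _]/(_ * _ : R); ring.
Qed.

End Factorials.

Section Expansion.
Variables (R : comNzRingType) (a b c0 cinf : R).
Local Notation P k := (falling ('X - c0%:P) b%:P k).
Local Notation Q m := (rising ('X + cinf%:P) b%:P m).

Lemma falling_rising_basis_step n k : (k <= n)%N ->
  (c0 + cinf + n%:R * b)%:P * ('X - n%:R * a%:P) * (P k * Q (n - k)) =
  (- a * n%:R + b * k%:R + c0) *: (P k * Q (n.+1 - k))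
  + ((a + b) * n%:R + - b * k%:R + cinf) *: (P k.+1 * Q (n - k)).
Proof.
move=> le_kn; rewrite subSn // risingS fallingS natrB // -!mul_polyC.
rewrite !(polyCM, polyCD, polyCN, polyCB, polyC_natr); ring.
Qed.

Lemma genEuler_expansion n :
  (rising (c0 + cinf) b n)%:P * falling 'X a%:P n =
  \sum_(k < n.+1) (genEuler a b c0 cinf n k)%:P * P k * Q (n - k).
Proof.
under eq_bigr do rewrite -mulrA mul_polyC.
elim: n => [|n IH].
  by rewrite big_ord1 /genEuler /rising /falling !big_ord0 polyC1 !mulr1 scale1r.
rewrite risingS fallingS polyCM mulrACA IH big_distrl /genEuler.
rewrite (@sum_GKPS _ _ _ _ _ _ _ _ (fun k => P k * Q (n.+1 - k))) /=.
apply: eq_bigr => [[k lt_kn]] _ /=.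
by rewrite subSS -scalerAl mulrC falling_rising_basis_step.
Qed.

End Expansion.

Section ClosedForm.
Variables (R : comNzRingType) (a b c0 cinf : R).

Definition euler_term n k j : R :=
  (-1) ^+ (k - j) * 'C(k, j)%:R * falling (b * n%:R + c0 + cinf) b (k - j)
  * rising (c0 + cinf) b j * falling (b * j%:R + c0) a n.

Definition euler_sum n k : R := \sum_(j < k.+1) euler_term n k j.

Lemma euler_termSS n k j : (j <= k.+1)%N ->
  euler_term n.+1 k.+1 j =
  (- a * n%:R + b * k.+1%:R + c0) * euler_term n k.+1 j
  + b * k.+1%:R * ((a + b) * n%:R + - b * k%:R + cinf) * euler_term n k j.
Proof.
rewrite /euler_term leq_eqVlt => /predU1P[-> | /[!ltnS] le_jk].
  rewrite subnn (bin_small (ltnSn k)) binn fallingS !falling0; ring.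
pose m := (k - j)%N.
have def_m : (k.+1 - j = m.+1)%N by rewrite subSn.
have def_k : k = (j + m)%N by rewrite subnKC.
have bin_rec : 'C(k, j)%:R * k.+1%:R = 'C(k.+1, j)%:R * m.+1%:R :> R.
  by rewrite -!natrM mulnC mul_bin_down def_m mulnC.
have shift_n : b * n.+1%:R + c0 + cinf - b = b * n%:R + c0 + cinf.
  by rewrite -addn1 natrD; ring.
rewrite def_m -/m exprS falling_recl shift_n !fallingS.
set C1 := 'C(k.+1, j)%:R; set C0 := 'C(k, j)%:R.
set s := (-1) ^+ m; set F := falling _ b m; set r := rising _ b j.
set f := falling _ a n.
(* A ring identity up to a multiple of the binomial relation [bin_rec]. *)
apply/eqP; rewrite -subr_eq0; apply/eqP.
transitivity (s * F * r * f * b * ((a + b) * n%:R + - b * k%:R + cinf)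
              * (C1 * m.+1%:R - C0 * k.+1%:R)).
  by rewrite def_k; ring.
by rewrite bin_rec subrr mulr0.
Qed.

Lemma euler_sum00 : euler_sum 0 0 = 1.
Proof. by rewrite /euler_sum big_ord1 /euler_term !falling0 rising0 bin0 !mulr1. Qed.

Lemma euler_sum0S k : euler_sum 0 k.+1 = 0.
Proof.
have -> : euler_sum 0 k.+1 =
    rising (c0 + cinf + - (c0 + cinf)) b k.+1.
  rewrite rising_vandermonde; apply: eq_bigr => j _.
  by rewrite /euler_term rising_opp mulr0 add0r falling0; ring.
by rewrite subrr /rising big_ord_recl mul0r add0r mul0r.
Qed.

Lemma euler_sumS0 n : euler_sum n.+1 0 = (- a * n%:R + c0) * euler_sum n 0.
Proof.
by rewrite /euler_sum !big_ord1 /euler_term /= !falling0 fallingS; ring.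
Qed.

Lemma euler_sumSS n k :
  euler_sum n.+1 k.+1 =
  (- a * n%:R + b * k.+1%:R + c0) * euler_sum n k.+1
  + b * k.+1%:R * ((a + b) * n%:R + - b * k%:R + cinf) * euler_sum n k.
Proof.
have -> : euler_sum n k = \sum_(j < k.+2) euler_term n k j.
  by rewrite big_ord_recr /= /euler_term bin_small // !(mulr0, mul0r) addr0.
rewrite /euler_sum !mulr_sumr -big_split; apply: eq_bigr => j _ /=.
exact/euler_termSS/(ltn_ord j).
Qed.

Lemma genEuler_scaled n k :
  b ^+ k * k`!%:R * genEuler a b c0 cinf n k = euler_sum n k.
Proof.
elim: n k => [|n IH] [|k].
- by rewrite euler_sum00 /genEuler /= !mulr1.
- by rewrite euler_sum0S /genEuler /= mulr0.
- by rewrite euler_sumS0 -IH /genEuler /= !mul1r.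
- rewrite euler_sumSS -!IH /genEuler /= factS natrM exprS; ring.
Qed.

End ClosedForm.

Theorem mainTheorem10 (C : numClosedFieldType) :
  (forall (a b c0 cinf : C) (n k : nat), b != 0 -> (k <= n)%N ->
     genEuler a b c0 cinf n k =
     (b ^+ k * (k`!)%:R)^-1 *
     \sum_(j < k.+1)
        (-1) ^+ (k - j) * ('C(k, j))%:R
        * falling (b * n%:R + c0 + cinf) b (k - j)
        * rising (c0 + cinf) b j
        * falling (b * j%:R + c0) a n)
  /\
  (forall (a b c0 cinf : C) (n : nat),
     (rising (c0 + cinf) b n)%:P * falling 'X a%:P n =
     \sum_(k < n.+1)
        (genEuler a b c0 cinf n k)%:P
        * falling ('X - c0%:P) b%:P k
        * rising ('X + cinf%:P) b%:P (n - k)).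
Proof.
split=> [a b c0 cinf n k b_neq0 _ | a b c0 cinf n]; last exact: genEuler_expansion.
have scale_neq0 : b ^+ k * k`!%:R != 0.
  by rewrite mulf_neq0 ?expf_neq0 // pnatr_eq0 -lt0n fact_gt0.
by rewrite -[LHS](mulKf scale_neq0) genEuler_scaled.
Qed.
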